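(* Consider on-line exploration of rings with homebase $v_0$ and invoking cost $q\ge 0$. Let $\mathcal{S}$ be the on-line strategy (procedure RingOnline) defined as follows. Invoke an agent $a_1$ at $v_0$. Let $f_1,f_{-1}$ be the two edges incident to $v_0$ with $w(f_1)\le w(f_{-1})$. Maintain an edge $R$ (initially $R=f_1$), an edge $L$ (initially $L=f_{-1}$) and a flag $s$ (initially $s=1$). Repeat until all vertices are explored: (i) while $w(L)+q\cdot s\ge w(R)$ and not all vertices are explored: $a_1$ traverses $R$, and $R$ is reset to the unexplored edge incident to the vertex now occupied by $a_1$; (ii) if $s=1$ and $w(f_{-1})+q<w(R)$: invoke a second agent $a_2$ at $v_0$, $a_2$ traverses $f_{-1}$, $L$ is reset to the unexplored edge incident to the vertex now occupied by $a_2$, and $s$ is set to $0$; (iii) if $s=0$: while $w(L)<w(R)$ and not all vertices are explored: $a_2$ traverses $L$, and $L$ is reset to the unexplored edge incident to the vertex now occupied by $a_2$. Then $\mathcal{S}$ is $2$-competitive on rings: for every edge-weighted ring $C$ with homebase $v_0$, $\mathcal{S}(C)\le 2\,\mathcal{S}^{opt}(C)$.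
   Context: Exploration model: a connected undirected graph with positive edge weights $w$ and a designated homebase vertex is given, together with an invoking cost $q\ge 0$. A strategy is a sequence of moves, each either (1) invoking a new agent, which appears at the homebase, or (2) an agent traversing an edge incident to its current vertex. A vertex is explored when first visited; a strategy explores the graph when every vertex has been visited by some agent (agents need not return to the homebase). If $k$ agents are used and agent $i$ traverses total distance $d_i$ (sum of weights of traversed edges, with multiplicity), the cost is $kq+\sum_i d_i$. A ring is a cycle graph with $n\ge 3$ vertices. In the on-line setting the graph is not known in advance: an agent at a vertex $v$ knows the weights of the edges incident to $v$ and whether each neighbour of $v$ is already explored, and agents communicate freely; the strategy's moves depend only on information revealed so far. $\mathcal{S}(C)$ denotes the cost of strategy $\mathcal{S}$ on $C$, and $\mathcal{S}^{opt}(C)$ the minimum cost of an off-line strategy (with full knowledge of $C$) exploring $C$ with the same $q$ and homebase. *)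

From HB Require Import structures.
From mathcomp Require Import all_boot all_order all_algebra.
Set Implicit Arguments. Unset Strict Implicit. Unset Printing Implicit Defensive.
Import Order.TTheory GRing.Theory Num.Theory.

(* Rings.  A ring with n >= 3 vertices has vertices 0, ..., n-1; edge e    *)
(* (for e < n) joins vertex e and vertex (e+1) mod n and has weight w e.   *)
(* The homebase v0 is vertex 0 (WLOG: any labelling is allowed, as w is    *)
(* arbitrary).                                                              *)

Definition succv (n v : nat) : nat := v.+1 %% n.
Definition predv (n v : nat) : nat := (v + n.-1) %% n.

Definition dest (n v : nat) (d : bool) : nat := if d then succv n v else predv n v.
Definition edge_of (n v : nat) (d : bool) : nat := if d then v else predv n v.

(* General (off-line) strategies: a sequence of moves.                     *)
(*   Traverse k d   : agent number k (0-based, in invocation order)        *)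
(*                    traverses the incident edge in direction d.          *)

Inductive move := Invoke | Traverse of nat & bool.

Record xstate := XState { pos : seq nat; visited : seq nat }.
Definition xinit : xstate := XState [::] [::].

Definition xstep (n : nat) (m : move) (st : xstate) : option xstate :=
  match m with
  | Invoke => Some (XState (rcons (pos st) 0) (0 :: visited st))
  | Traverse k d =>
      if k < size (pos st) then
        let v' := dest n (nth 0 (pos st) k) d in
        Some (XState (set_nth 0 (pos st) k v') (v' :: visited st))
      else None
  end.

Fixpoint xexec (n : nat) (ms : seq move) (st : xstate) : option xstate :=
  match ms with
  | [::] => Some st
  | m :: ms' => match xstep n m st with
                | Some st' => xexec n ms' st'
                | None => None
                end
  end.

Definition explored_all (n : nat) (st : xstate) : bool :=
  all (fun v => v \in visited st) (iota 0 n).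

Local Open Scope ring_scope.

Definition move_cost (R : numDomainType) (n : nat) (w : nat -> R) (q : R)
    (st : xstate) (m : move) : R :=
  match m with
  | Invoke => q
  | Traverse k d => w (edge_of n (nth 0%N (pos st) k) d)
  end.

Fixpoint run (R : numDomainType) (n : nat) (w : nat -> R) (q : R)
    (ms : seq move) (st : xstate) (c : R) : option (xstate * R) :=
  match ms with
  | [::] => Some (st, c)
  | m :: ms' => match xstep n m st with
                | Some st' => run n w q ms' st' (c + move_cost n w q st m)
                | None => None
                end
  end.

Definition explores_with_cost (R : numDomainType) (n : nat) (w : nat -> R) (q : R)
    (T : seq move) (c : R) : Prop :=
  exists st, run n w q T xinit 0 = Some (st, c) /\ explored_all n st.

Definition strategy_cost (R : numDomainType) (n : nat) (w : nat -> R) (q : R)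
    (T : seq move) : R :=
  match run n w q T xinit 0 with Some (_, c) => c | None => 0 end.

(* Procedure RingOnline, as a small-step program.  Agent a1 is agent 0,    *)
(* agent a2 is agent 1.  Edges R, L are stored by their index.             *)

Inductive phase :=
  | PStart
  | PTop
  | PI
  | PIReset
  | PII
  | PIIReset
  | PIII
  | PIIIReset.

Record ctrl := Ctrl { eR : nat; eL : nat; sflag : bool; ph : phase }.
Definition ctrl_init : ctrl := Ctrl 0 0 true PStart.

Definition unexp_edge (n : nat) (st : xstate) (u : nat) : nat :=
  if succv n u \notin visited st then u else predv n u.

(* f_1 and f_{-1}: the edges at 0 with w f_1 <= w f_{-1} (ties: f_1 = edge 0) *)
Definition f1 (R : numDomainType) (n : nat) (w : nat -> R) : nat :=
  if w 0%N <= w n.-1 then 0%N else n.-1.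
Definition fm1 (R : numDomainType) (n : nat) (w : nat -> R) : nat :=
  if w 0%N <= w n.-1 then n.-1 else 0%N.

(* One control step: None = halt; otherwise the moves performed during this
   step (possibly none) and the new control state. *)
Definition decide (R : numDomainType) (n : nat) (w : nat -> R) (q : R)
    (st : xstate) (cs : ctrl) : option (seq move * ctrl) :=
  let a1 := nth 0%N (pos st) 0%N in
  let a2 := nth 0%N (pos st) 1%N in
  let s := sflag cs in
  match ph cs with
  | PStart => Some ([:: Invoke], Ctrl (f1 n w) (fm1 n w) true PTop)
  | PTop => if explored_all n st then None
            else Some ([::], Ctrl (eR cs) (eL cs) s PI)
  | PI => if (w (eR cs) <= w (eL cs) + q * (s : nat)%:R) && ~~ explored_all n st
          then Some ([:: Traverse 0%N (eR cs == a1)], Ctrl (eR cs) (eL cs) s PIReset)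
          else Some ([::], Ctrl (eR cs) (eL cs) s PII)
  | PIReset => Some ([::], Ctrl (unexp_edge n st a1) (eL cs) s PI)
  | PII => if s && (w (fm1 n w) + q < w (eR cs)) && ~~ explored_all n st
           then Some ([:: Invoke; Traverse 1%N (fm1 n w == 0%N)],
                      Ctrl (eR cs) (eL cs) s PIIReset)
           else Some ([::], Ctrl (eR cs) (eL cs) s PIII)
  | PIIReset => Some ([::], Ctrl (eR cs) (unexp_edge n st a2) false PIII)
  | PIII => if ~~ s && (w (eL cs) < w (eR cs)) && ~~ explored_all n st
            then Some ([:: Traverse 1%N (eL cs == a2)], Ctrl (eR cs) (eL cs) s PIIIReset)
            else Some ([::], Ctrl (eR cs) (eL cs) s PTop)
  | PIIIReset => Some ([::], Ctrl (eR cs) (unexp_edge n st a2) s PIII)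
  end.

Inductive online_exec (R : numDomainType) (n : nat) (w : nat -> R) (q : R)
    : xstate -> ctrl -> seq move -> Prop :=
  | oe_halt st cs : decide n w q st cs = None -> online_exec n w q st cs [::]
  | oe_step st cs ms cs' st' rest :
      decide n w q st cs = Some (ms, cs') ->
      xexec n ms st = Some st' ->
      online_exec n w q st' cs' rest ->
      online_exec n w q st cs (ms ++ rest).

Definition ring_online_moves (R : numDomainType) (n : nat) (w : nat -> R) (q : R)
    (ms : seq move) : Prop :=
  online_exec n w q xinit ctrl_init ms.

From HB Require Import structures.
From mathcomp Require Import all_boot all_order all_algebra zify lra.
Set Implicit Arguments. Unset Strict Implicit. Unset Printing Implicit Defensive.
Import Order.TTheory GRing.Theory Num.Theory.

(* Any exploring strategy invokes an agent and, once every vertex is visited, has traversed all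
   edges but at most one: two untraversed edges would cut off an arc avoiding the homebase.  So it
   costs at least q + W - w(e) for some edge e, where W is the total weight.
   RingOnline lets a1 sweep the ring from the homebase in the direction of f_1 and, possibly, a2 in
   the other direction; it stops when a1's frontier edge e_i is the only unswept edge, having paid
   W - w(e_i) plus q or 2q.  Against 2(q + W - w(e)) it then suffices to bound 2w(e), and the loop
   guards do it: the edges a1 sweeps before a2 is invoked weigh at most w(f_-1) + q, which is less
   than the weight of the edge that triggers the invocation, and every edge swept afterwards weighs
   at most the last frontier edge e_i. *)

(** * Walking around the ring *)

Section Walk.
Variable n : nat.

Definition walk_vertex (d : bool) (k : nat) : nat := if d then k %% n else (n - k) %% n.
Definition walk_edge (d : bool) (k : nat) : nat := if d then k else n.-1 - k.

Lemma subn_mod k : k < n -> (n - k) %% n = if k == 0 then 0 else n - k.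
Proof.
move=> hk; case: eqP => [->|hk0]; first by rewrite subn0 modnn.
by rewrite modn_small //; lia.
Qed.

Lemma walk_vertex_lt d k : 0 < n -> walk_vertex d k < n.
Proof. by move=> n_gt0; case: d; rewrite /walk_vertex ltn_pmod. Qed.

Lemma walk_vertex0 d : walk_vertex d 0 = 0.
Proof. by case: d; rewrite /walk_vertex ?mod0n ?subn0 ?modnn. Qed.

Lemma walk_vertexK d v : v < n -> walk_vertex d (walk_vertex d v) = v.
Proof.
move=> hv; case: d; rewrite /walk_vertex; first by rewrite !modn_small.
rewrite (subn_mod hv); case: eqP => [->|hv0]; first by rewrite subn0 modnn.
rewrite subn_mod; last lia.
by case: eqP; lia.
Qed.

Lemma walk_vertexN d k : k < n -> walk_vertex d (walk_vertex (~~ d) k) = (n - k) %% n.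
Proof. by move=> hk; case: d; rewrite /walk_vertex /= ?modn_mod // (modn_small hk). Qed.

Lemma dest_walk_vertex d k : k < n -> dest n (walk_vertex d k) d = walk_vertex d k.+1.
Proof.
move=> hk; case: d; rewrite /dest /walk_vertex /succv /predv; first by rewrite (modn_small hk).
rewrite (subn_mod hk); case: eqP => [->|hk0].
  by rewrite add0n subn1 modn_small //; lia.
by rewrite (_ : n - k + n.-1 = n - k.+1 + n) ?modnDr //; lia.
Qed.

Lemma edge_of_walk_vertex d k : k < n -> edge_of n (walk_vertex d k) d = walk_edge d k.
Proof.
move=> hk; case: d; rewrite /edge_of /walk_vertex /walk_edge /predv.
  by rewrite (modn_small hk).
rewrite (subn_mod hk); case: eqP => [->|hk0].
  by rewrite add0n modn_small //; lia.
by rewrite (_ : n - k + n.-1 = n.-1 - k + n) ?modnDr ?modn_small //; lia.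
Qed.

(* [decide] encodes the direction of a move along edge [e] from vertex [u] as [e == u]. *)
Lemma eq_walk_edge_vertex d k : 1 < n -> k < n -> (walk_edge d k == walk_vertex d k) = d.
Proof.
move=> n_gt1 hk; case: d; rewrite /walk_vertex /walk_edge; first by rewrite (modn_small hk) eqxx.
by rewrite (subn_mod hk); apply/negbTE/eqP; case: eqP; lia.
Qed.

Lemma walk_edge_lt d k : k < n -> walk_edge d k < n.
Proof. by case: d; rewrite /walk_edge; lia. Qed.

Lemma walk_edgeN d k : k < n -> walk_edge (~~ d) k = walk_edge d (n.-1 - k).
Proof. by case: d; rewrite /walk_edge /=; lia. Qed.

Lemma walk_edgeK d k : k < n -> walk_edge d (walk_edge d k) = k.
Proof. by case: d; rewrite /walk_edge; lia. Qed.

Lemma unexp_edge_walk st d k : 0 < k < n ->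
  walk_vertex d k.+1 \notin visited st -> walk_vertex d k.-1 \in visited st ->
  unexp_edge n st (walk_vertex d k) = walk_edge d k.
Proof.
move=> /andP[k_gt0 hk]; rewrite /unexp_edge.
case: d; rewrite /walk_vertex /walk_edge /succv /predv; first by rewrite (modn_small hk) => ->.
rewrite (subn_mod hk) (negbTE (_ : k != 0)); last by lia.
rewrite (_ : (n - k).+1 = n - k.-1); last by lia.
move=> _ ->; rewrite (_ : n - k + n.-1 = n.-1 - k + n); last by lia.
by rewrite modnDr modn_small //; lia.
Qed.

End Walk.

Lemma destE n u d : u < n -> dest n u d =
  if d then (if u.+1 == n then 0 else u.+1) else (if u == 0 then n.-1 else u.-1).
Proof.
move=> hu; case: d; rewrite /dest /succv /predv.
  by case: eqP => [->|h]; [rewrite modnn | rewrite modn_small //; lia].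
case: eqP => [->|h]; first by rewrite add0n modn_small //; lia.
by rewrite (_ : u + n.-1 = u.-1 + n) ?modnDr ?modn_small //; lia.
Qed.

Lemma edge_ofE n u d : u < n ->
  edge_of n u d = if d then u else (if u == 0 then n.-1 else u.-1).
Proof.
move=> hu; case: d; rewrite /edge_of /predv //.
case: eqP => [->|h]; first by rewrite add0n modn_small //; lia.
by rewrite (_ : u + n.-1 = u.-1 + n) ?modnDr ?modn_small //; lia.
Qed.

Lemma edge_of_lt n u d : u < n -> edge_of n u d < n.
Proof. by move=> hu; rewrite edge_ofE //; case: d; repeat case: eqP; lia. Qed.

(** * Lower bound for off-line strategies *)

Lemma mem_set_nth_ltn (T : eqType) (x0 : T) s i y x : i < size s ->
  x \in set_nth x0 s i y -> (x == y) || (x \in s).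
Proof.
elim: s i => [|a s IH] [|i] //= hi; rewrite !in_cons.
  by case/orP=> ->; rewrite ?orbT.
case/orP=> [->|/(IH i hi)/orP[->|->]]; by rewrite ?orbT.
Qed.

(* Cutting the ring at edges [e1 < e2] separates the arc [e1 < v <= e2] from the homebase 0. *)
Definition home_side (n : nat) (E : seq nat) (v : nat) : Prop :=
  v < n /\ forall e1 e2, e1 < e2 < n -> e1 \notin E -> e2 \notin E -> ~~ (e1 < v <= e2).

Lemma home_side0 n E : 0 < n -> home_side n E 0.
Proof. by split=> // e1 e2 *; apply/negP => /andP[]; lia. Qed.

Lemma home_side_cons n E e v : home_side n E v -> home_side n (e :: E) v.
Proof.
case=> hv hcut; split=> // e1 e2 h12; rewrite !in_cons !negb_or.
by move=> /andP[_ h1] /andP[_ h2]; apply: hcut.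
Qed.

Lemma home_side_dest n E u d : home_side n E u ->
  home_side n (edge_of n u d :: E) (dest n u d).
Proof.
case=> hu hcut; split; first by rewrite destE //; case: d; repeat case: eqP; lia.
move=> e1 e2 h12; rewrite !in_cons !negb_or => /andP[n1 h1] /andP[n2 h2].
have := hcut e1 e2 h12 h1 h2; move: n1 n2; rewrite destE // edge_ofE //.
by case: d; repeat case: eqP; move=> *; apply/negP => /andP[] *; lia.
Qed.

Lemma home_side_untraversed n E e1 e2 : (forall v, v < n -> home_side n E v) ->
  e1 < n -> e2 < n -> e1 \notin E -> e2 \notin E -> e1 = e2.
Proof.
move=> hall he1 he2 h1 h2; case: (ltngtP e1 e2) => // [lt12|lt21].
  by have [_ /(_ e1 e2)] := hall e2 he2; rewrite lt12 he2 leqnn => /(_ isT h1 h2).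
by have [_ /(_ e2 e1)] := hall e1 he1; rewrite lt21 he1 leqnn => /(_ isT h2 h1).
Qed.

Section LowerBound.
Local Open Scope ring_scope.
Variables (R : realDomainType) (n : nat) (w : nat -> R) (q : R).
Hypothesis n_gt0 : (0 < n)%N.
Hypothesis w_ge0 : forall i, (i < n)%N -> 0 <= w i.
Hypothesis q_ge0 : 0 <= q.

(* [E] collects the traversed edges. *)
Definition traversal_lb (st : xstate) (E : seq nat) (c : R) : Prop :=
  [/\ forall v, v \in pos st ++ visited st -> home_side n E v,
      pos st = [::] -> visited st = [::] &
      \sum_(i < n | (i : nat) \in E) w i + (if pos st is [::] then 0 else q) <= c].

Lemma sum_mem_cons e E :
  \sum_(i < n | (i : nat) \in e :: E) w i =
  \sum_(i < n | (i : nat) \in E) w i + (if (e < n)%N && (e \notin E) then w e else 0).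
Proof.
have [eE|eNE] /= := boolP (e \in E).
  by rewrite andbF addr0; apply: eq_bigl => i; rewrite in_cons; case: eqP => // ->.
case: ltnP => [he|he]; last first.
  rewrite addr0; apply: eq_bigl => i; rewrite in_cons.
  by case: eqP => // hi; move: (ltn_ord i); rewrite hi ltnNge he.
rewrite (bigD1 (Ordinal he)) ?mem_head //= addrC; congr (_ + _); apply: eq_bigl => i.
by rewrite in_cons -val_eqE /=; case: eqP => [->|_]; rewrite /= ?(negbTE eNE) ?andbT.
Qed.

Lemma traversal_lb_invoke st E c :
  traversal_lb st E c -> traversal_lb (XState (rcons (pos st) 0) (0 :: visited st)) E (c + q).
Proof.
case=> hside hpos hc; split=> /=.
- move=> v; rewrite mem_cat mem_rcons !in_cons; case: (v =P 0%N) => [->|_] /=.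
    by move=> _; exact: home_side0.
  by move=> hv; apply: hside; rewrite mem_cat.
- by case: (pos st).
- case: (pos st) hc => [|a s] /= hc; first lra.
  by apply: le_trans hc _; rewrite lerDl.
Qed.

Lemma traversal_lb_traverse st E c k d (u := nth 0 (pos st) k) : (k < size (pos st))%N ->
  traversal_lb st E c ->
  traversal_lb (XState (set_nth 0 (pos st) k (dest n u d)) (dest n u d :: visited st))
    (edge_of n u d :: E) (c + w (edge_of n u d)).
Proof.
move=> hk [hside hpos hc].
have hu : home_side n E u by apply: hside; rewrite mem_cat mem_nth.
split=> /=.
- move=> v; rewrite mem_cat in_cons => /or3P[/(mem_set_nth_ltn hk)/orP[/eqP->|hv]|/eqP->|hv].
  + exact: home_side_dest.
  + by apply/home_side_cons/hside; rewrite mem_cat hv.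
  + exact: home_side_dest.
  + by apply/home_side_cons/hside; rewrite mem_cat hv orbT.
- by case: (set_nth _ _ _ _) (size_set_nth 0 (pos st) k (dest n u d)) => //=; lia.
- have hu_lt : (u < n)%N by case: hu.
  have he := w_ge0 (edge_of_lt d hu_lt).
  case: (pos st) hk hc => [|a s] // _ hc.
  case: (set_nth _ _ _ _) (size_set_nth 0 (a :: s) k (dest n u d)) => [|b t] /=; first lia.
  by move=> _; rewrite sum_mem_cons; case: ifP => _; lra.
Qed.

Lemma traversal_lb_run T st E c st' c' : run n w q T st c = Some (st', c') ->
  traversal_lb st E c -> exists E', traversal_lb st' E' c'.
Proof.
elim: T st E c => [|[|k d] T IH] st E c /=; first by case=> <- <-; exists E.
  by move=> /IH hrun /traversal_lb_invoke; apply: hrun.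
case: ltnP => // hk /IH hrun /(traversal_lb_traverse d hk); apply: hrun.
Qed.

Lemma offline_cost_lb T c : explores_with_cost n w q T c ->
  exists2 e, (e < n)%N & q + \sum_(i < n) w i - w e <= c.
Proof.
case=> st [hrun hexp].
have [|E [hside hpos hc]] := traversal_lb_run hrun (E := [::]).
  by split=> //=; rewrite big_pred0 ?addr0.
have hvis v : (v < n)%N -> v \in visited st by move=> hv; move/allP: hexp; apply; rewrite mem_iota.
have hall v : (v < n)%N -> home_side n E v.
  by move=> /hvis hv; apply: hside; rewrite mem_cat hv orbT.
have {hc} hc : \sum_(i < n | (i : nat) \in E) w i + q <= c.
  by case: (pos st) hpos hc => // /(_ erefl) hnil; move: (hvis 0%N n_gt0); rewrite hnil.
have [e heE|allE] := pickP (fun i : 'I_n => (i : nat) \notin E); last first.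
  exists 0%N => //; have := w_ge0 n_gt0.
  suff -> : \sum_(i < n) w i = \sum_(i < n | (i : nat) \in E) w i by lra.
  by apply: eq_bigl => i; have /negbFE := allE i.
exists e => //; rewrite (bigD1 e) //=.
suff -> : \sum_(i < n | i != e) w i = \sum_(i < n | (i : nat) \in E) w i by lra.
apply: eq_bigl => i; apply/idP/idP => [|iE]; last by apply: contraTneq iE => ->.
apply: contraNT => iNE; apply/eqP/val_inj.
exact: home_side_untraversed hall (ltn_ord i) (ltn_ord e) iNE heE.
Qed.

End LowerBound.

(** * Runs of RingOnline *)

Lemma run_cat (R : numDomainType) n (w : nat -> R) q a b st c :
  run n w q (a ++ b) st c =
  if run n w q a st c is Some (st', c') then run n w q b st' c' else None.
Proof. by elim: a st c => [|m a IH] st c //=; case: (xstep n m st) => // st1; rewrite IH. Qed.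

Lemma run_xexec (R : numDomainType) n (w : nat -> R) q ms st c st' c' :
  run n w q ms st c = Some (st', c') -> xexec n ms st = Some st'.
Proof.
elim: ms st c => [|m ms IH] st c /=; first by case=> ->.
by case: (xstep n m st) => // st1; apply: IH.
Qed.

Lemma online_exec_det (R : numDomainType) n (w : nat -> R) q st cs ms1 ms2 :
  online_exec n w q st cs ms1 -> online_exec n w q st cs ms2 -> ms1 = ms2.
Proof.
move=> h1; elim: h1 ms2 => [st0 cs0 hd|st0 cs0 ms cs1 st1 rest hd hx _ IH] ms2 h2;
  inversion h2 as [? ? hd'|? ? ms' cs1' st1' rest' hd' hx' he']; subst;
  rewrite hd in hd' => //.
case: hd' => ? ?; subst ms' cs1'; rewrite hx in hx'; case: hx' => ?; subst st1'.
by rewrite (IH _ he').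
Qed.

Section Online.
Local Open Scope ring_scope.
Variables (R : realFieldType) (n : nat) (w : nat -> R) (q : R).
Hypothesis n_ge3 : (3 <= n)%N.
Hypothesis w_gt0 : forall i, (i < n)%N -> 0 < w i.
Hypothesis q_ge0 : 0 <= q.

Let n_gt0 : (0 < n)%N. Proof. lia. Qed.

(* [a1] walks in direction [dir1] (along f_1), [a2] in direction [~~ dir1]; [rw k] is the weight of
   the [k]-th edge on [a1]'s walk, so [a2]'s [j]-th edge weighs [rw (n.-1 - j)]. *)
Definition dir1 : bool := w 0%N <= w n.-1.
Definition rw (k : nat) : R := w (walk_edge n dir1 k).
Definition total_weight : R := \sum_(0 <= k < n) rw k.

Lemma rw_gt0 k : (k < n)%N -> 0 < rw k.
Proof. by move=> hk; apply/w_gt0/walk_edge_lt. Qed.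

Lemma w_walk_edgeN j : (j < n)%N -> w (walk_edge n (~~ dir1) j) = rw (n.-1 - j).
Proof. by move=> hj; rewrite walk_edgeN. Qed.

Lemma f1E : f1 n w = walk_edge n dir1 0.
Proof. by rewrite /f1 /walk_edge /dir1; case: ifP; rewrite ?subn0. Qed.

Lemma fm1E : fm1 n w = walk_edge n (~~ dir1) 0.
Proof. by rewrite /fm1 /walk_edge /dir1; case: ifP; rewrite /= ?subn0. Qed.

Lemma w_fm1 : w (fm1 n w) = rw n.-1.
Proof. by rewrite fm1E w_walk_edgeN ?subn0. Qed.

Lemma fm1_eq0 : (fm1 n w == 0%N) = ~~ dir1.
Proof. by rewrite /fm1 /dir1; case: ifP => //= _; apply/eqP; lia. Qed.

Lemma rw0_le : rw 0 <= rw n.-1.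
Proof.
rewrite /rw /dir1 /walk_edge; case: ifP => //= /negbT.
by rewrite subn0 subnn -ltNge => /ltW.
Qed.

Lemma total_weightE : total_weight = \sum_(k < n) w k.
Proof.
rewrite /total_weight /rw -(big_mkord xpredT w); case: dir1 => //=.
by rewrite big_nat_rev /=; apply: eq_big_nat => k hk; congr w; rewrite /walk_edge; lia.
Qed.

Lemma rw_le_total a : (a < n)%N -> rw a <= total_weight.
Proof.
move=> ha; rewrite /total_weight big_mkord (bigD1 (Ordinal ha)) //= lerDl.
by apply: sumr_ge0 => k _; apply/ltW/rw_gt0.
Qed.

Lemma rwD_le_total a b : (a < n)%N -> (b < n)%N -> a != b -> rw a + rw b <= total_weight.
Proof.
move=> ha hb hab; rewrite /total_weight big_mkord (bigD1 (Ordinal ha)) //=.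
rewrite (bigD1 (Ordinal hb)) /=; last by rewrite -val_eqE /= eq_sym.
by rewrite addrA lerDl; apply: sumr_ge0 => k _; apply/ltW/rw_gt0.
Qed.

Lemma sum_a2_rw j : (j < n)%N ->
  \sum_(n - j.+1 <= k < n) rw k = rw (n.-1 - j) + \sum_(n - j <= k < n) rw k.
Proof.
move=> hj; rewrite big_ltn; last lia.
have -> : (n - j.+1).+1 = (n - j)%N by lia.
by have -> : (n - j.+1)%N = (n.-1 - j)%N by lia.
Qed.

Lemma sum_swept_rw i j : (i + j = n.-1)%N ->
  \sum_(0 <= k < i) rw k + \sum_(n - j <= k < n) rw k = total_weight - rw i.
Proof.
move=> hij; rewrite /total_weight [in RHS](big_cat_nat _ (n := i)) //=; last lia.
rewrite [in RHS](big_ltn (m := i)); last lia.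
have -> : i.+1 = (n - j)%N by lia.
by rewrite addrA addrAC addrK.
Qed.

Definition swept (i j v : nat) : bool :=
  (v < n)%N && ((walk_vertex n dir1 v <= i)%N || (n - j <= walk_vertex n dir1 v)%N).

Lemma swept0 i j : swept i j 0.
Proof. by rewrite /swept walk_vertex0 n_gt0. Qed.

Lemma swept_a1 i j v : (i + j < n.-1)%N ->
  (v == walk_vertex n dir1 i.+1) || swept i j v = swept i.+1 j v.
Proof.
move=> hij; rewrite /swept; case: eqP => [->|hv] /=.
  by rewrite walk_vertex_lt // walk_vertexK ?leqnn //; lia.
case: (ltnP v n) => //= hvn.
have : walk_vertex n dir1 v != i.+1 by apply: contra_not_neq hv => <-; rewrite walk_vertexK.
by move: (walk_vertex n dir1 v) => x; lia.
Qed.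

Lemma swept_a2 i j v : (i + j < n.-1)%N ->
  (v == walk_vertex n (~~ dir1) j.+1) || swept i j v = swept i j.+1 v.
Proof.
move=> hij; rewrite /swept.
have hj : (j.+1 < n)%N by lia.
have hm : ((n - j.+1) %% n = n - j.+1)%N by rewrite modn_small //; lia.
case: eqP => [->|hv] /=.
  by rewrite walk_vertex_lt // walk_vertexN // hm leqnn orbT.
case: (ltnP v n) => //= hvn.
have : walk_vertex n dir1 v != (n - j.+1)%N.
  apply: contra_not_neq hv => hvj.
  rewrite -(walk_vertexK dir1 hvn) hvj -hm -(walk_vertexN dir1 hj).
  by rewrite walk_vertexK // walk_vertex_lt.
by move: (walk_vertex n dir1 v) => x; lia.
Qed.

(* [a1] has made [i] moves and [a2] [j] moves; [s] is RingOnline's flag, set until [a2] is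
   invoked. *)
Definition sweep_state (st : xstate) (c : R) (s : bool) (i j : nat) : Prop :=
  [/\ (i + j < n)%N /\ (s -> j = 0%N),
      pos st = (if s then [:: walk_vertex n dir1 i]
                else [:: walk_vertex n dir1 i; walk_vertex n (~~ dir1) j]),
      forall v, (v \in visited st) = swept i j v &
      c = (if s then q else 2 * q) + \sum_(0 <= k < i) rw k + \sum_(n - j <= k < n) rw k].

Lemma sweep_state_init : sweep_state (XState [:: 0%N] [:: 0%N]) (0 + q) true 0 0.
Proof.
split=> //=; first by rewrite walk_vertex0.
- move=> v; rewrite in_cons in_nil orbF; case: (v =P 0%N) => [->|hv]; first by rewrite swept0.
  rewrite /swept; case: (ltnP v n) => //= hvn.
  have : walk_vertex n dir1 v != 0%N.
    by apply: contra_not_neq hv => hv0; rewrite -(walk_vertexK dir1 hvn) hv0 walk_vertex0.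
  by move: (walk_vertex_lt dir1 v n_gt0); move: (walk_vertex n dir1 v) => x; lia.
- by rewrite subn0 !big_geq //; lra.
Qed.

Lemma explored_allE st c s i j : sweep_state st c s i j ->
  explored_all n st = (n.-1 <= i + j)%N.
Proof.
case=> [[hij _] _ hvis _]; rewrite /explored_all; case: (leqP n.-1 (i + j)) => h.
  apply/allP => v; rewrite mem_iota add0n => /andP[_ hvn]; rewrite hvis /swept hvn /=.
  by move: (walk_vertex_lt dir1 v n_gt0); move: (walk_vertex n dir1 v) => x; lia.
apply/negP => /allP /(_ (walk_vertex n dir1 i.+1)).
rewrite mem_iota add0n walk_vertex_lt // => /(_ isT).
by rewrite hvis /swept walk_vertexK; lia.
Qed.

Lemma sweep_state_a1 st c s i j : sweep_state st c s i j -> (i + j < n.-1)%N ->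
  exists2 st', run n w q [:: Traverse 0 (walk_edge n dir1 i == nth 0%N (pos st) 0)] st c
                 = Some (st', c + rw i)
             & sweep_state st' (c + rw i) s i.+1 j.
Proof.
case: st => p vis [[hij hsj] /= hp hvis hc] hij'; have hi : (i < n)%N by lia.
have hdir : walk_edge n dir1 i == nth 0%N p 0 = dir1.
  rewrite (_ : nth _ _ 0 = walk_vertex n dir1 i) ?eq_walk_edge_vertex //; first lia.
  by rewrite hp; case: (s).
rewrite hdir; exists (XState (if s then [:: walk_vertex n dir1 i.+1]
                           else [:: walk_vertex n dir1 i.+1; walk_vertex n (~~ dir1) j])
                        (walk_vertex n dir1 i.+1 :: vis)).
  by rewrite /= hp; case: (s); rewrite /= dest_walk_vertex // edge_of_walk_vertex.
split=> //=; first by split=> //; lia.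
- by move=> v; rewrite in_cons hvis; exact: swept_a1.
- by rewrite hc big_nat_recr //=; lra.
Qed.

Lemma sweep_state_a2 st c i j : sweep_state st c false i j -> (i + j < n.-1)%N ->
  exists2 st', run n w q [:: Traverse 1 (walk_edge n (~~ dir1) j == nth 0%N (pos st) 1)] st c
                 = Some (st', c + rw (n.-1 - j))
             & sweep_state st' (c + rw (n.-1 - j)) false i j.+1.
Proof.
case: st => p vis [[hij _] /= hp hvis hc] hij'; have hj : (j < n)%N by lia.
rewrite hp /= eq_walk_edge_vertex //; last lia.
eexists; first by rewrite /= dest_walk_vertex // edge_of_walk_vertex // walk_edgeN.
split=> //=; first by split=> //; lia.
- by move=> v; rewrite in_cons hvis; exact: swept_a2.
- by rewrite hc sum_a2_rw //; lra.
Qed.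

Lemma sweep_state_invoke st c i : sweep_state st c true i 0 -> (i < n.-1)%N ->
  exists2 st', run n w q [:: Invoke; Traverse 1 (fm1 n w == 0%N)] st c
                 = Some (st', c + q + rw n.-1)
             & sweep_state st' (c + q + rw n.-1) false i 1.
Proof.
case: st => p vis [[hij _] /= hp hvis hc] hi.
eexists.
  rewrite /= hp /= fm1_eq0 -(walk_vertex0 n (~~ dir1)) dest_walk_vertex //.
  by rewrite edge_of_walk_vertex // walk_vertex0 w_walk_edgeN // subn0.
split=> //=; first by split=> //; lia.
- move=> v; rewrite !in_cons hvis -(swept_a2 _ (j := 0)) ?addn0 //.
  by case: (v =P 0%N) => [->|_] /=; rewrite ?swept0 ?orbT.
- by rewrite hc (sum_a2_rw (j := 0)) // !subn0; lra.
Qed.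

Lemma unexp_edge_a1 st c s i j : sweep_state st c s i j -> (0 < i)%N -> (i + j < n.-1)%N ->
  unexp_edge n st (nth 0%N (pos st) 0) = walk_edge n dir1 i.
Proof.
case=> [_ hp hvis _] hi hij.
rewrite (_ : nth _ _ 0 = walk_vertex n dir1 i); last by rewrite hp; case: (s).
apply: unexp_edge_walk; rewrite ?hvis /swept ?walk_vertexK ?walk_vertex_lt //; lia.
Qed.

Lemma unexp_edge_a2 st c i j : sweep_state st c false i j -> (0 < j)%N -> (i + j < n.-1)%N ->
  unexp_edge n st (nth 0%N (pos st) 1) = walk_edge n (~~ dir1) j.
Proof.
case=> [_ hp hvis _] hj hij; rewrite hp /=.
apply: unexp_edge_walk; rewrite ?hvis /swept ?walk_vertexN ?walk_vertex_lt //; try lia.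
  by rewrite modn_small; lia.
by case: (j =P 1%N) => [->|hj1]; [rewrite subn0 modnn | rewrite modn_small; lia].
Qed.

(* [i0] is the number of moves [a1] had made when [a2] was invoked; every edge swept since then
   weighs at most one of the two current frontier edges. *)
Definition sweep_history (s : bool) (i j i0 : nat) : Prop :=
  if s then forall k, (k < i)%N -> rw k <= rw n.-1 + q
  else [/\ (0 < i0 <= i)%N /\ (0 < j)%N, rw n.-1 + q < rw i0,
        forall k, (k < i0)%N -> rw k <= rw n.-1 + q,
        forall k, (i0 <= k < i)%N -> (rw k <= rw i) || (rw k <= rw (n.-1 - j)) &
        forall k, (0 < k < j)%N ->
          (rw (n.-1 - k) <= rw i) || (rw (n.-1 - k) <= rw (n.-1 - j))].

Lemma sweep_history_a1 s i j i0 : sweep_history s i j i0 ->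
  rw i <= (if s then rw n.-1 + q else rw (n.-1 - j)) -> sweep_history s i.+1 j i0.
Proof.
case: s => /= [hist hi k|[[hi0 hj] hbig hpre hR hL] hi].
  by rewrite ltnS leq_eqVlt => /orP[/eqP->|/hist].
split=> //; first by split=> //; lia.
- move=> k /andP[hk]; rewrite ltnS leq_eqVlt => /orP[/eqP->|hki]; first by rewrite hi orbT.
  by have /orP[h|h] := hR k (introT andP (conj hk hki)); rewrite ?(le_trans h hi) ?h orbT.
- by move=> k /hL /orP[h|h]; rewrite ?(le_trans h hi) ?h orbT.
Qed.

Lemma sweep_history_a2 i j i0 : sweep_history false i j i0 ->
  rw (n.-1 - j) < rw i -> sweep_history false i j.+1 i0.
Proof.
case=> [[hi0 hj] hbig hpre hR hL] /ltW hj_lt; split=> //.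
- by move=> k /hR /orP[h|h]; rewrite ?(le_trans h hj_lt) ?h.
- move=> k /andP[hk]; rewrite ltnS leq_eqVlt => /orP[/eqP->|hkj]; first by rewrite hj_lt.
  by have /orP[h|h] := hL k (introT andP (conj hk hkj)); rewrite ?(le_trans h hj_lt) ?h.
Qed.

Lemma sweep_history_invoke i i0 : sweep_history true i 0 i0 -> (0 < i)%N ->
  rw n.-1 + q < rw i -> sweep_history false i 1 i.
Proof. by move=> hist hi hbig; split=> //; [rewrite hi leqnn | move=> k; lia | move=> k; lia]. Qed.

Definition within_twice (c : R) : Prop :=
  forall m, (m < n)%N -> c <= 2 * (q + total_weight - rw m).

Lemma within_twice_one_agent i0 :
  sweep_history true n.-1 0 i0 -> within_twice (q + \sum_(0 <= k < n.-1) rw k).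
Proof.
move=> hist m hm; have hn1 : (n.-1 < n)%N by lia.
have -> : \sum_(0 <= k < n.-1) rw k = total_weight - rw n.-1.
  by apply/eqP; rewrite eq_sym subr_eq /total_weight -big_nat_recr //= prednK.
have := q_ge0; have := rw_gt0 hn1; case: (m =P n.-1) => [->|/eqP hmn].
  by have := rw_le_total hn1; lra.
have hm1 : (m < n.-1)%N by lia.
have := hist m hm1; have := rwD_le_total hm hn1 hmn; lra.
Qed.

Lemma within_twice_two_agents i j i0 : (i + j = n.-1)%N ->
  sweep_history false i j i0 -> within_twice (2 * q + total_weight - rw i).
Proof.
move=> hij [[/andP[i0_gt0 i0_le] j_gt0] hbig hpre hR hL] m hm.
rewrite (_ : (n.-1 - j)%N = i) ?orbb in hR hL; last lia.
suff : 2 * rw m <= total_weight + rw i by lra.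
have hi : (i < n)%N by lia.
have hi0 : (i0 < n)%N by lia.
have := q_ge0; have := rw_gt0 hi; case: (ltngtP m i) => [hmi|hmi|->].
- case: (ltnP m i0) => hmi0; last first.
    by have := hR m (introT andP (conj hmi0 hmi)); have := rw_le_total hm; lra.
  have hne : m != i0 by rewrite neq_ltn hmi0.
  by have := hpre m hmi0; have := rwD_le_total hm hi0 hne; lra.
- case: (m =P n.-1) => [->|/eqP hmn].
    have hne : n.-1 != i0 by apply/eqP; lia.
    have hn1 : (n.-1 < n)%N by lia.
    by have := rwD_le_total hn1 hi0 hne; lra.
  have hk : (0 < n.-1 - m < j)%N by lia.
  have := hL _ hk; rewrite (_ : (n.-1 - (n.-1 - m))%N = m); last lia.
  by have := rw_le_total hm; lra.
- by have := rw_le_total hi; lra.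
Qed.

Lemma sweep_within_twice st c s i j i0 : sweep_state st c s i j -> sweep_history s i j i0 ->
  (n.-1 <= i + j)%N -> within_twice c.
Proof.
case=> [[hij hsj] _ _ ->]; case: s hsj => [/(_ erefl) -> hist|_ hist] hn.
  rewrite (_ : i = n.-1) in hist *; last lia.
  by rewrite subn0 (big_geq (m := n)) // addr0; apply: within_twice_one_agent hist.
rewrite -addrA sum_swept_rw ?addrA; last lia.
by apply: within_twice_two_agents hist; lia.
Qed.

(* [R] is [a1]'s next edge, and [L] is f_-1 before [a2] is invoked and [a2]'s next edge afterwards;
   both only matter while exploration is unfinished. *)
Definition ctrl_agrees (st : xstate) (cs : ctrl) (s : bool) (i j : nat) : Prop :=
  let X := ~~ explored_all n st in
  match ph cs with
  | PStart => False
  | PTop | PI | PII | PIII =>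
      [/\ sflag cs = s, X -> eR cs = walk_edge n dir1 i, s -> eL cs = fm1 n w &
          ~~ s -> X -> eL cs = walk_edge n (~~ dir1) j]
  | PIReset =>
      [/\ sflag cs = s, (0 < i)%N, s -> eL cs = fm1 n w &
          ~~ s -> X -> eL cs = walk_edge n (~~ dir1) j]
  | PIIReset => [/\ sflag cs, s = false, j = 1%N & X -> eR cs = walk_edge n dir1 i]
  | PIIIReset => [/\ sflag cs = s, s = false, (0 < j)%N & X -> eR cs = walk_edge n dir1 i]
  end.

Definition online_inv (st : xstate) (cs : ctrl) (c : R) (s : bool) (i j i0 : nat) : Prop :=
  [/\ sweep_state st c s i j, sweep_history s i j i0 & ctrl_agrees st cs s i j].

Definition loop_i_guard (st : xstate) (cs : ctrl) : bool :=
  (w (eR cs) <= w (eL cs) + q * (sflag cs : nat)%:R) && ~~ explored_all n st.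

Definition step_ii_guard (st : xstate) (cs : ctrl) : bool :=
  sflag cs && (w (fm1 n w) + q < w (eR cs)) && ~~ explored_all n st.

(* Each move decreases [n - (i + j)]; between two moves the rank of the phase decreases. *)
Definition phase_rank (st : xstate) (cs : ctrl) : nat :=
  match ph cs with
  | PTop => if explored_all n st then 0
            else if sflag cs || (w (eR cs) <= w (eL cs)) then 3 else 9
  | PI => if loop_i_guard st cs || step_ii_guard st cs then 2 else 6
  | PII => if step_ii_guard st cs then 1 else 5
  | PIII => 4
  | PStart | PIReset | PIIReset | PIIIReset => 9
  end.

Definition measure (st : xstate) (cs : ctrl) (i j : nat) : nat :=
  10 * (n - (i + j)) + phase_rank st cs.

Definition advances (st : xstate) (cs : ctrl) (c : R) (i j : nat) (ms : seq move) (cs' : ctrl)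
    : Prop :=
  exists st' c' s' i' j' i0',
    [/\ run n w q ms st c = Some (st', c'), online_inv st' cs' c' s' i' j' i0' &
        (measure st' cs' i' j' < measure st cs i j)%N].

Lemma phase_rank_le st cs : (phase_rank st cs <= 9)%N.
Proof. by rewrite /phase_rank; case: (ph cs); repeat case: ifP. Qed.

Lemma advances_idle st cs cs' c s i j i0 : online_inv st cs c s i j i0 ->
  ctrl_agrees st cs' s i j -> (phase_rank st cs' < phase_rank st cs)%N ->
  advances st cs c i j [::] cs'.
Proof.
case=> hsweep hhist _ hctrl hrank; exists st, c, s, i, j, i0; split=> //.
by rewrite /measure ltn_add2l.
Qed.

Lemma advances_move st cs cs' c i j ms st' c' s' i' j' i0' :
  run n w q ms st c = Some (st', c') -> online_inv st' cs' c' s' i' j' i0' ->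
  (i' + j' = (i + j).+1)%N -> advances st cs c i j ms cs'.
Proof.
move=> hrun hinv hij; exists st', c', s', i', j', i0'; split=> //.
case: hinv => [[[hij' _] _ _ _] _ _]; have := phase_rank_le st' cs'.
by rewrite /measure; lia.
Qed.

Lemma step_top st cs c s i j i0 ms cs' : ph cs = PTop -> online_inv st cs c s i j i0 ->
  decide n w q st cs = Some (ms, cs') -> advances st cs c i j ms cs'.
Proof.
case: cs => eR eL sf ph0 /= -> inv; rewrite /decide /=; case: ifP => // hX [<- <-].
have [_ _ [/= hsf hR hL1 hL2]] := inv.
apply: advances_idle inv _ _; first by split.
rewrite /phase_rank /loop_i_guard /step_ii_guard /= hX hsf /= !andbT.
case: s {hsf hR} hL1 hL2 => [/(_ erefl) -> _|_ _] /=.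
  by rewrite mulr1; case: leP.
by rewrite mulr0n mulr0 addr0 orbF; case: ifP.
Qed.

Lemma step_i st cs c s i j i0 ms cs' : ph cs = PI -> online_inv st cs c s i j i0 ->
  decide n w q st cs = Some (ms, cs') -> advances st cs c i j ms cs'.
Proof.
case: cs => eR eL sf ph0 /= -> inv; rewrite /decide /=; case: ifP => hg [<- <-]; last first.
  have [_ _ hctrl] := inv; apply: advances_idle inv _ _; first exact: hctrl.
  by rewrite /phase_rank /loop_i_guard /step_ii_guard /= hg /=; case: ifP.
have [hsweep hhist [/= hsf hR hL1 hL2]] := inv; subst sf.
have hX : ~~ explored_all n st by case/andP: hg.
have hij : (i + j < n.-1)%N by move: hX; rewrite (explored_allE hsweep); lia.
rewrite (hR hX); have [st' hrun hsweep'] := sweep_state_a1 hsweep hij.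
apply: (advances_move _ hrun (s' := s) (i' := i.+1) (j' := j) (i0' := i0)); last by [].
split=> //; last by split=> // hs _; apply: hL2 hs hX.
apply: sweep_history_a1 hhist _; case/andP: hg; rewrite (hR hX) => hle _.
case: (s) hL1 hL2 hle => [/(_ erefl) -> _|_ /(_ isT hX) ->] /=.
  by rewrite w_fm1 mulr1.
by rewrite w_walk_edgeN ?mulr0n ?mulr0 ?addr0 //; lia.
Qed.

Lemma step_i_reset st cs c s i j i0 ms cs' : ph cs = PIReset -> online_inv st cs c s i j i0 ->
  decide n w q st cs = Some (ms, cs') -> advances st cs c i j ms cs'.
Proof.
case: cs => eR eL sf ph0 /= -> inv; rewrite /decide /= => -[<- <-].
have [hsweep _ [/= hsf hi hL1 hL2]] := inv.
apply: advances_idle inv _ _; last by rewrite /phase_rank /=; case: ifP.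
split=> //= hX; apply: (unexp_edge_a1 hsweep hi).
by move: hX; rewrite (explored_allE hsweep); lia.
Qed.

Lemma step_ii st cs c s i j i0 ms cs' : ph cs = PII -> online_inv st cs c s i j i0 ->
  decide n w q st cs = Some (ms, cs') -> advances st cs c i j ms cs'.
Proof.
case: cs => eR eL sf ph0 /= -> inv; rewrite /decide /=; case: ifP => hg [<- <-]; last first.
  have [_ _ hctrl] := inv; apply: advances_idle inv _ _; first exact: hctrl.
  by rewrite /phase_rank /step_ii_guard /= hg.
case/andP: hg => /andP[hsf' hlt] hX.
have [hsweep hhist [/= hsf hR _ _]] := inv; subst sf.
case: s hsf' hsweep hhist {inv} => // _ hsweep hhist.
have [[_ /(_ erefl) j0] _ _ _] := hsweep; subst j.
have hi : (i < n.-1)%N by move: hX; rewrite (explored_allE hsweep); lia.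
rewrite w_fm1 (hR hX) -/(rw i) in hlt.
have i_gt0 : (0 < i)%N by case: (posnP i) hlt => // ->; have := rw0_le; have := q_ge0; lra.
have [st' hrun hsweep'] := sweep_state_invoke hsweep hi.
apply: (advances_move _ hrun (s' := false) (i' := i) (j' := 1%N) (i0' := i)); last first.
  by rewrite addn0 addn1.
split=> //; first exact: sweep_history_invoke hhist i_gt0 hlt.
by split=> // _; exact: hR.
Qed.

Lemma step_ii_reset st cs c s i j i0 ms cs' : ph cs = PIIReset -> online_inv st cs c s i j i0 ->
  decide n w q st cs = Some (ms, cs') -> advances st cs c i j ms cs'.
Proof.
case: cs => eR eL sf ph0 /= -> inv; rewrite /decide /= => -[<- <-].
have [hsweep _ [/= _ hs hj hR]] := inv; subst s j.
apply: advances_idle inv _ _ => //.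
split=> //= _ hX; apply: (unexp_edge_a2 hsweep) => //.
by move: hX; rewrite (explored_allE hsweep); lia.
Qed.

Lemma step_iii st cs c s i j i0 ms cs' : ph cs = PIII -> online_inv st cs c s i j i0 ->
  decide n w q st cs = Some (ms, cs') -> advances st cs c i j ms cs'.
Proof.
case: cs => eR eL sf ph0 /= -> inv; rewrite /decide /=; case: ifP => hg [<- <-]; last first.
  have [_ _ hctrl] := inv; apply: advances_idle inv _ _; first exact: hctrl.
  rewrite /phase_rank /=; case: ifP => // hX; move: hg; rewrite hX andbT.
  by case: sf {hctrl} => //= /negbT; rewrite -leNgt => ->.
case/andP: hg => /andP[hsf' hlt] hX.
have [hsweep hhist [/= hsf hR _ hL]] := inv; subst sf.
case: s hsf' hsweep hhist hL inv => // _ hsweep hhist hL _.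
have hij' : (i + j < n.-1)%N by move: hX; rewrite (explored_allE hsweep); lia.
rewrite (hL isT hX) (hR hX) w_walk_edgeN -/(rw i) in hlt *; last lia.
have [st' hrun hsweep'] := sweep_state_a2 hsweep hij'.
apply: (advances_move _ hrun (s' := false) (i' := i) (j' := j.+1) (i0' := i0)); last first.
  by rewrite addnS.
by split=> //; apply: sweep_history_a2 hhist hlt.
Qed.

Lemma step_iii_reset st cs c s i j i0 ms cs' : ph cs = PIIIReset -> online_inv st cs c s i j i0 ->
  decide n w q st cs = Some (ms, cs') -> advances st cs c i j ms cs'.
Proof.
case: cs => eR eL sf ph0 /= -> inv; rewrite /decide /= => -[<- <-].
have [hsweep _ [/= hsf hs hj hR]] := inv; subst sf s.
apply: advances_idle inv _ _ => //.
split=> //= _ hX; apply: (unexp_edge_a2 hsweep hj).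
by move: hX; rewrite (explored_allE hsweep); lia.
Qed.

Lemma online_step st cs c s i j i0 ms cs' : online_inv st cs c s i j i0 ->
  decide n w q st cs = Some (ms, cs') -> advances st cs c i j ms cs'.
Proof.
case hph: (ph cs).
- by case: cs hph => ? ? ? ? /= -> [_ _].
- exact: step_top.
- exact: step_i.
- exact: step_i_reset.
- exact: step_ii.
- exact: step_ii_reset.
- exact: step_iii.
- exact: step_iii_reset.
Qed.

Lemma online_halt st cs c s i j i0 : online_inv st cs c s i j i0 ->
  decide n w q st cs = None -> within_twice c.
Proof.
case: cs => eR eL sf [] [hsweep hhist _]; rewrite /decide /=; try by repeat case: ifP.
case: ifP => // hX _; apply: (sweep_within_twice hsweep hhist).
by rewrite -(explored_allE hsweep).
Qed.

Lemma online_exec_within_twice N st cs c s i j i0 : (measure st cs i j < N)%N ->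
  online_inv st cs c s i j i0 ->
  exists ms stf cf,
    [/\ online_exec n w q st cs ms, run n w q ms st c = Some (stf, cf) & within_twice cf].
Proof.
elim: N st cs c s i j i0 => // N IH st cs c s i j i0 hmeasure inv.
case hd: (decide n w q st cs) => [[ms1 cs1]|]; last first.
  by exists [::], st, c; split=> //; [exact: oe_halt | exact: online_halt inv hd].
have [st' [c' [s' [i' [j' [i0' [hrun inv' hlt]]]]]]] := online_step inv hd.
have [|ms2 [stf [cf [hexec hrun2 hfin]]]] := IH _ _ _ _ _ _ _ _ inv'; first lia.
exists (ms1 ++ ms2), stf, cf; split=> //; first exact: oe_step hd (run_xexec hrun) hexec.
by rewrite run_cat hrun.
Qed.

Lemma ring_online_cost_ub : exists2 ms, ring_online_moves n w q ms &
  forall e, (e < n)%N -> strategy_cost n w q ms <= 2 * (q + \sum_(k < n) w k - w e).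
Proof.
pose cs1 := Ctrl (f1 n w) (fm1 n w) true PTop.
have inv1 : online_inv (XState [:: 0%N] [:: 0%N]) cs1 (0 + q) true 0 0 0.
  by split; [exact: sweep_state_init | by [] | split=> //= _; rewrite f1E].
have [ms [stf [cf [hexec hrun hfin]]]] := online_exec_within_twice (ltnSn _) inv1.
exists (Invoke :: ms); first exact: (oe_step (ms := [:: Invoke])) hexec.
move=> e he; rewrite /strategy_cost (run_cat _ _ _ [:: Invoke]) /= hrun.
by have := hfin _ (walk_edge_lt dir1 he); rewrite /rw walk_edgeK // total_weightE.
Qed.

End Online.

Local Open Scope ring_scope.

Theorem lemma1 (R : realFieldType) (n : nat) (w : nat -> R) (q : R) :
  (3 <= n)%N -> (forall i, (i < n)%N -> 0 < w i) -> 0 <= q ->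
  (exists ms, ring_online_moves n w q ms) /\
  (forall ms, ring_online_moves n w q ms ->
     forall (T : seq move) (c : R), explores_with_cost n w q T c ->
       strategy_cost n w q ms <= 2 * c).
Proof.
move=> n_ge3 w_gt0 q_ge0.
have [ms hms hub] := ring_online_cost_ub n_ge3 w_gt0 q_ge0.
split=> [|ms' hms' T c hT]; first by exists ms.
have w_ge0 i : (i < n)%N -> 0 <= w i by move/w_gt0/ltW.
have n_gt0 : (0 < n)%N by lia.
have [e he hlb] := offline_cost_lb n_gt0 w_ge0 q_ge0 hT.
rewrite (online_exec_det hms' hms); apply: le_trans (hub e he) _; lra.
Qed.
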